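(* Let $\theta:=\sqrt{5-\pi^2/3}$ and define, for $(Z_1,Z_2)\in\mathbb{R}^2$ and $\delta>0$, $$E(Z_1,Z_2):=Z_1^2+Z_2^2+2Z_1,$$ $$P_\delta(Z_1,Z_2):=(1+\delta)(Z_1^2+Z_2^2)+2Z_1Z_2^2+\frac23Z_1^3+6\delta\big(|Z_1|Z_2^2+|Z_1|^3\big)-2\Big(1-\delta-\Big(\frac23+\delta\Big)\frac{21}{20}\theta Z_2\Big)Z_2^2.$$ There exist $\delta_2,\delta_3>0$ such that for any $0<\delta<\delta_2$: if $(Z_1,Z_2)\in\mathbb{R}^2$ satisfies $|E(Z_1,Z_2)|\le\delta_3$, then $$P_\delta(Z_1,Z_2)-|E(Z_1,Z_2)|^2\le0.$$ *)

From Stdlib Require Import Reals Lra.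
Open Scope R_scope.

Definition theta : R := sqrt (5 - PI ^ 2 / 3).

Definition E (Z1 Z2 : R) : R := Z1 ^ 2 + Z2 ^ 2 + 2 * Z1.

Definition P (delta Z1 Z2 : R) : R :=
  (1 + delta) * (Z1 ^ 2 + Z2 ^ 2) + 2 * Z1 * Z2 ^ 2 + (2 / 3) * Z1 ^ 3
  + 6 * delta * (Rabs Z1 * Z2 ^ 2 + Rabs Z1 ^ 3)
  - 2 * (1 - delta - (2 / 3 + delta) * (21 / 20) * theta * Z2) * Z2 ^ 2.

From Stdlib Require Import Reals Lra.
Open Scope R_scope.

(* Put u = -Z1 and s = Z2^2, so that E = u^2 + s - 2u and |E| <= 1/50 keeps
   (u, s) near the arc s = 2u - u^2, 0 <= u <= 2.  For delta < 1/2000 the delta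
   terms of P are absorbed into (Z1^2 + Z2^2)/100, and since theta < 1.31 (from
   pi > 3.139) the cubic term is at most 1.84 |Z2|^3 <= 7/10 Z2^2 + 121/100 Z2^4
   by AM-GM.  Hence P - E^2 <= -G u s for an explicit quartic G.  Near the origin
   G is a sum of two nonnegative products.  Elsewhere, expanding in
   e = E around the arc gives G = u C(u) + e L(u) - 21/100 e^2 with C >= 1/5, and
   u/5 dominates the perturbation |e L(u)| + 21/100 e^2 since |e| <= 1/50. *)

Lemma Rabs_le_inv (x a : R) : Rabs x <= a -> - a <= x <= a.
Proof.
  intros Hx. pose proof (Rle_abs x). pose proof (Rle_abs (- x)).
  rewrite Rabs_Ropp in *. lra.
Qed.

Lemma pow3_le_AM_GM (a b c t : R) :
  0 <= a -> 0 <= b -> c^2 <= 4 * a * b -> c * t^3 <= a * t^2 + b * t^4.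
Proof.
  intros Ha Hb Hc.
  assert (Hquad : 0 <= a - c * t + b * t^2).
  { destruct (Rle_lt_or_eq_dec 0 b Hb) as [Hbpos | <-].
    - apply (Rmult_le_reg_l (4 * b)); [lra |].
      pose proof (pow2_ge_0 (2 * b * t - c)). nra.
    - assert (c = 0) by (apply Rsqr_0_uniq; unfold Rsqr; nra).
      subst c; lra. }
  nra.
Qed.

Definition G (u s : R) : R :=
  u^4 - 10/3 * u^3 + 299/100 * u^2 + s * (29/100 - 2 * u + 2 * u^2) - 21/100 * s^2.

Definition G_circle (u : R) : R := 29/50 - 107/50 * u + 263/75 * u^2 - 121/100 * u^3.

Definition G_slope (u : R) : R := 29/100 - 71/25 * u + 121/50 * u^2.

Lemma G_circle_expansion (u e : R) :
  G u (2 * u - u^2 + e) = u * G_circle u + e * G_slope u - 21/100 * e^2.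
Proof. unfold G, G_circle, G_slope; field. Qed.

(* The minimum of G_circle on [0, 2] is about 0.207, near u = 19/50. *)
Lemma G_circle_ge (u : R) : 0 <= u <= 201/100 -> 1/5 <= G_circle u.
Proof. intros Hu. unfold G_circle. pose proof (pow2_ge_0 (u - 19/50)). nra. Qed.

Lemma G_nonneg_near_origin (u s : R) :
  u <= 1/20 -> 0 <= s <= 2 * u - u^2 + 1/50 -> 0 <= G u s.
Proof.
  intros Hu Hs.
  replace (G u s) with
    (u^2 * ((u - 5/3)^2 + 191/900) + s * (29/100 - 2 * u + 2 * u^2 - 21/100 * s))
    by (unfold G; field).
  assert (0 <= 29/100 - 2 * u + 2 * u^2 - 21/100 * s) by nra.
  pose proof (pow2_ge_0 u); pose proof (pow2_ge_0 (u - 5/3)).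
  apply Rplus_le_le_0_compat; apply Rmult_le_pos; lra.
Qed.

Lemma G_nonneg_off_origin (u e : R) :
  1/20 <= u -> -1/50 <= e <= 1/50 -> 0 <= 2 * u - u^2 + e ->
  0 <= G u (2 * u - u^2 + e).
Proof.
  intros Hu He Hs.
  assert (Hu_le : u <= 201/100) by nra.
  rewrite G_circle_expansion.
  pose proof (G_circle_ge u ltac:(lra)).
  assert (- (10 * u - 21/500) <= G_slope u <= 10 * u - 21/500)
    by (unfold G_slope; split; nra).
  nra.
Qed.

Lemma G_nonneg (u s : R) :
  0 <= s -> Rabs (u^2 + s - 2 * u) <= 1/50 -> 0 <= G u s.
Proof.
  intros Hs He. apply Rabs_le_inv in He.
  destruct (Rle_lt_dec u (1/20)) as [Hnear | Hfar].
  - apply G_nonneg_near_origin; lra.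
  - replace s with (2 * u - u^2 + (u^2 + s - 2 * u)) by ring.
    apply G_nonneg_off_origin; lra.
Qed.

Lemma PI_ge_3139 : 3139/1000 <= PI.
Proof.
  destruct (PI_2_3_7_ineq 1) as [Hlow _].
  simpl in Hlow; unfold tg_alt, PI_2_3_7_tg, Ratan_seq in Hlow; simpl in Hlow.
  lra.
Qed.

Lemma theta_le : theta <= 131/100.
Proof.
  unfold theta. rewrite <- (sqrt_pow2 (131/100)) by lra.
  apply sqrt_le_1_alt. pose proof PI_ge_3139. nra.
Qed.

Lemma P_split (delta Z1 Z2 : R) :
  P delta Z1 Z2 =
    Z1^2 + Z2^2 + 2 * Z1 * Z2^2 + 2/3 * Z1^3 - 2 * Z2^2
    + delta * (Z1^2 + 3 * Z2^2 + 6 * (Rabs Z1 * Z2^2 + Rabs Z1 * Z1^2))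
    + 2 * (2/3 + delta) * (21/20) * theta * Z2^3.
Proof.
  unfold P. replace (Rabs Z1 ^ 3) with (Rabs Z1 * Rabs Z1 ^ 2) by ring.
  rewrite pow2_abs. field.
Qed.

Lemma P_sub_E_sq_le (delta Z1 Z2 : R) :
  0 < delta <= 1/2000 -> Rabs (E Z1 Z2) <= 1/50 ->
  P delta Z1 Z2 - E Z1 Z2 ^ 2 <= - G (- Z1) (Z2^2).
Proof.
  intros Hd HE. apply Rabs_le_inv in HE. unfold E in HE.
  assert (HZ1 : Rabs Z1 <= 201/100) by (apply Rabs_le; nra).
  pose proof (Rabs_pos Z1); pose proof (pow2_ge_0 Z1); pose proof (pow2_ge_0 Z2).
  assert (Hdelta :
    delta * (Z1^2 + 3 * Z2^2 + 6 * (Rabs Z1 * Z2^2 + Rabs Z1 * Z1^2))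
    <= 1/100 * (Z1^2 + Z2^2)).
  { assert (Rabs Z1 * Z2^2 <= 201/100 * Z2^2) by (apply Rmult_le_compat_r; lra).
    assert (Rabs Z1 * Z1^2 <= 201/100 * Z1^2) by (apply Rmult_le_compat_r; lra).
    nra. }
  assert (Hcubic :
    2 * (2/3 + delta) * (21/20) * theta * Z2^3 <= 7/10 * Z2^2 + 121/100 * Z2^4).
  { pose proof theta_le; pose proof (sqrt_pos (5 - PI ^ 2 / 3)); fold theta in *.
    apply pow3_le_AM_GM; nra. }
  rewrite P_split. unfold E, G. nra.
Qed.

Theorem lemma2p6 :
  exists delta2 delta3 : R, 0 < delta2 /\ 0 < delta3 /\
    forall delta : R, 0 < delta < delta2 ->
      forall Z1 Z2 : R, Rabs (E Z1 Z2) <= delta3 ->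
        P delta Z1 Z2 - (Rabs (E Z1 Z2)) ^ 2 <= 0.
Proof.
  exists (1/2000), (1/50). split; [lra |]. split; [lra |].
  intros delta Hdelta Z1 Z2 HE.
  rewrite pow2_abs.
  pose proof (P_sub_E_sq_le delta Z1 Z2 ltac:(lra) HE).
  assert (0 <= G (- Z1) (Z2^2)).
  { apply G_nonneg; [apply pow2_ge_0 |].
    replace ((- Z1)^2 + Z2^2 - 2 * - Z1) with (E Z1 Z2) by (unfold E; ring).
    exact HE. }
  lra.
Qed.
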